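(* Let $k_2=\frac{1}{8\cdot3^{2/3}}$. Then for every integer $\nu\ge1$, $c_\nu\ge\frac14+k_2\nu^{-2/3}$.
   Context: A weighted digraph $D=(V,A,w)$ is a digraph without loops or parallel arcs (opposite arcs allowed) with weights $w:A\to\mathbb{R}_{\ge0}$; $w(D)$ is the total arc weight. For a partition $(X,Y)$ of $V$, $w(X,Y)$ is the total weight of arcs from $X$ to $Y$, and $\mathrm{mac}(D)=\max_{(X,Y)}w(X,Y)$. For an integer $\nu\ge1$, $c_\nu$ is the supremum of reals $c\ge0$ such that every acyclic weighted digraph $D$ whose longest directed path has exactly $\nu$ vertices satisfies $\mathrm{mac}(D)\ge c\cdot w(D)$. *)

From HB Require Import structures.
From mathcomp Require Import all_boot all_order all_algebra.
From mathcomp Require Import all_classical all_reals all_analysis.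
Set Implicit Arguments. Unset Strict Implicit. Unset Printing Implicit Defensive.
Import Order.TTheory GRing.Theory Num.Theory.
Local Open Scope ring_scope.
Local Open Scope classical_set_scope.

(* A weighted digraph on a finite vertex type V: arc relation A (no loops,
   no parallel arcs since A is a relation; opposite arcs allowed) and a
   nonnegative weight w x y on each arc (x,y). Values of w off arcs are
   irrelevant. *)
Definition weighted_digraph (R : realType) (V : finType) (A : rel V)
  (w : V -> V -> R) : Prop :=
  (forall x, ~~ A x x) /\ (forall x y, A x y -> 0 <= w x y).

Definition total_weight (R : realType) (V : finType) (A : rel V)
  (w : V -> V -> R) : R :=
  \sum_(x : V) \sum_(y : V | A x y) w x y.

Definition cut_weight (R : realType) (V : finType) (A : rel V)
  (w : V -> V -> R) (X : {set V}) : R :=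
  \sum_(x in X) \sum_(y in ~: X | A x y) w x y.

Definition mac (R : realType) (V : finType) (A : rel V)
  (w : V -> V -> R) : R :=
  \big[Num.max/0]_(X : {set V}) cut_weight A w X.

Definition dipath (V : finType) (A : rel V) (x : V) (p : seq V) : bool :=
  path A x p && uniq (x :: p).

Definition acyclic (V : finType) (A : rel V) : Prop :=
  forall x y, A x y -> ~~ connect A y x.

Definition longest_path_vertices (V : finType) (A : rel V) (nu : nat) : Prop :=
  (exists x p, dipath A x p /\ size (x :: p) = nu) /\
  (forall x p, dipath A x p -> (size (x :: p) <= nu)%N).

(* c_nu as a supremum (in the extended reals, so that the supremum of an
   unbounded set is +oo) *)
Definition c_nu (R : realType) (nu : nat) : \bar R :=
  ereal_sup [set (c%:E)%E | c in
    [set c : R | 0 <= c /\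
      forall (V : finType) (A : rel V) (w : V -> V -> R),
        weighted_digraph A w -> acyclic A -> longest_path_vertices A nu ->
        c * total_weight A w <= mac A w]].

Definition k2 (R : realType) : R := 1 / (8 * (3 `^ (2 / 3))).

From HB Require Import structures.
From mathcomp Require Import all_boot all_order all_algebra.
From mathcomp Require Import all_classical all_reals all_analysis.
From mathcomp Require Import zify ring lra.

(* Give every vertex its level, the number of arcs of a longest path ending at
   it: levels lie in [0, nu) and strictly increase along arcs.  Cut the levels
   into s + 1 consecutive blocks of D levels and, independently in each block
   b, choose a uniformly random set of k_b = (D + s)/2 - b of its D positions;
   X is the set of vertices whose position is chosen in their block.  An arc
   inside a block is cut with probability k (D - k) / (D (D - 1)), and an arc
   from block b to a later block b' with probability (k_b / D) (1 - k_b' / D).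
   Since |2 k_b - D| <= s and k_b > k_b', both are at least
   1/4 + (D - s^2) / (4 D (D - 1)), and for s ~ (nu / 4)^(1/3), D ~ 4 s^2 this
   is at least 1/4 + k2 nu^(-2/3).  Some cut weighs at least the average. *)

Set Implicit Arguments. Unset Strict Implicit. Unset Printing Implicit Defensive.
Import Order.TTheory GRing.Theory Num.Theory.
Local Open Scope ring_scope.

Lemma connect_to_last (V : finType) (A : rel V) x p y :
  path A x p -> y \in x :: p -> connect A y (last x p).
Proof.
move=> Axp yp; case/splitPl: yp Axp => p1 p2 lastp1.
rewrite cat_path last_cat => /andP[_ Ap2].
by apply/connectP; exists p2; rewrite -lastp1.
Qed.

Lemma acyclic_level (V : finType) (A : rel V) (nu : nat) :
  acyclic A -> longest_path_vertices A nu ->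
  exists l : V -> 'I_nu, forall x y, A x y -> (l x < l y)%N.
Proof.
move=> Aacyc [_ longest].
pose ends_at v n := exists x p, [/\ dipath A x p, last x p = v & size p = n].
have ends_lt v n : ends_at v n -> (n < nu)%N by case=> x [p [/longest + _ <-]].
have max_end v : exists n : 'I_nu, ends_at v n /\ forall m, ends_at v m -> (m <= n)%N.
  have ends0 : exists n, `[< ends_at v n >] by exists 0%N; apply/asboolP; exists v, [::].
  have ends_le n : `[< ends_at v n >] -> (n <= nu)%N by move/asboolP/ends_lt/ltnW.
  case: (ex_maxnP ends0 ends_le) => n /asboolP vn nmax.
  exists (Ordinal (ends_lt _ _ vn)); split=> // m vm; exact/nmax/asboolP.
have [l lP] := choice max_end; exists l => x y Axy.
have [[z [p [/andP[Azp uniqp] zpx sizep]]] _] := lP x.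
apply: (proj2 (lP y)); exists z, (rcons p y); split; last by rewrite size_rcons sizep.
- rewrite /dipath rcons_path Azp zpx Axy -rcons_cons rcons_uniq uniqp /= andbT.
  by apply: contra (Aacyc x y Axy) => /(connect_to_last Azp); rewrite zpx.
- by rewrite last_rcons.
Qed.

Lemma lex_block_position (V : Type) (B D : nat) (l : V -> nat) :
  (0 < D)%N -> (forall v, l v < B * D)%N ->
  exists (blk : V -> 'I_B) (pos : V -> 'I_D), forall x y, (l x < l y)%N ->
    (blk x < blk y)%N || (blk x == blk y) && (pos x != pos y).
Proof.
move=> D_gt0 l_lt.
have blk_lt v : (l v %/ D < B)%N by rewrite ltn_divLR.
exists (fun v => Ordinal (blk_lt v)), (fun v => Ordinal (ltn_pmod (l v) D_gt0)).
move=> x y lxy; rewrite -!val_eqE /=.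
have := leq_div2r D (ltnW lxy); rewrite leq_eqVlt => /orP[/eqP same_div|->//].
rewrite same_div ltnn eqxx /=; apply: contraTneq lxy => same_mod.
by rewrite (divn_eq (l x) D) (divn_eq (l y) D) same_div same_mod ltnn.
Qed.

Section Averaging.
Variables (R : realType) (V : finType) (A : rel V) (w : V -> V -> R).

Lemma cut_weight_indicator (X : {set V}) :
  cut_weight A w X =
  \sum_x \sum_(y | A x y) ((x \in X) && (y \notin X))%:R * w x y.
Proof.
rewrite /cut_weight big_mkcond /=; apply: eq_bigr => x _.
case: (x \in X); last by rewrite big1 // => y _; rewrite mul0r.
rewrite [RHS]big_mkcond [LHS]big_mkcond /=; apply: eq_bigr => y _.
by rewrite inE; case: (y \in X); case: (A x y); rewrite /= ?mul0r ?mul1r.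
Qed.

Lemma cut_weight_le_mac (X : {set V}) : cut_weight A w X <= mac A w.
Proof. exact: (le_bigmax _ (cut_weight A w)). Qed.

Lemma mac_ge_average (O : finType) (mu : O -> R) (X : O -> {set V}) (c : R) :
  weighted_digraph A w -> (forall o, 0 <= mu o) -> \sum_o mu o = 1 ->
  (forall x y, A x y -> c <= \sum_o mu o * ((x \in X o) && (y \notin X o))%:R) ->
  c * total_weight A w <= mac A w.
Proof.
move=> [_ w_ge0] mu_ge0 mu_sum1 cut_prob.
have average_cut : \sum_o mu o * cut_weight A w (X o) =
    \sum_x \sum_(y | A x y)
       (\sum_o mu o * ((x \in X o) && (y \notin X o))%:R) * w x y.
  under eq_bigr => o _ do rewrite cut_weight_indicator mulr_sumr.
  rewrite exchange_big /=; apply: eq_bigr => x _.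
  under eq_bigr => o _ do rewrite mulr_sumr.
  rewrite exchange_big /=; apply: eq_bigr => y _.
  by rewrite mulr_suml; apply: eq_bigr => o _; rewrite mulrA.
apply: (@le_trans _ _ (\sum_o mu o * cut_weight A w (X o))).
  rewrite average_cut /total_weight mulr_sumr; apply: ler_sum => x _.
  rewrite mulr_sumr; apply: ler_sum => y Axy.
  by rewrite ler_wpM2r ?w_ge0 ?cut_prob.
rewrite -[mac A w]mul1r -mu_sum1 mulr_suml; apply: ler_sum => o _.
by rewrite ler_wpM2l ?cut_weight_le_mac.
Qed.

End Averaging.

Section UniformSubsets.
Variables (R : numFieldType) (T : finType).

Lemma card_subsets_through (r : T) (C : {set T}) k : r \notin C ->
  #|[set S : {set T} | [&& S \subset r |: C, r \in S & #|S| == k.+1]]| = 'C(#|C|, k).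
Proof.
move=> rC; rewrite -cards_draws.
have rS' (S' : {set T}) : S' \subset C -> r \notin S'.
  by move=> S'C; apply: contra rC; exact: (fintype.subsetP S'C).
have -> : [set S : {set T} | [&& S \subset r |: C, r \in S & #|S| == k.+1]] =
    (fun S' => r |: S') @: [set S' : {set T} | S' \subset C & #|S'| == k].
  apply/setP => S; rewrite inE; apply/idP/imsetP => [/and3P[SrC rS cardS]|[S' + ->]].
    exists (S :\ r); last by rewrite finset.setD1K.
    by rewrite inE subDset SrC -eqSS -add1n; move: cardS; rewrite (cardsD1 r) rS.
  rewrite inE => /andP[S'C cardS'].
  by rewrite finset.setUS // finset.setU11 cardsU1 rS' // cardS'.
rewrite card_in_imset // => S1 S2; rewrite !inE => /andP[/rS' rS1 _] /andP[/rS' rS2 _] e.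
by rewrite -(finset.setU1K rS1) e finset.setU1K.
Qed.

Definition unif_subset (k : nat) (S : {set T}) : R :=
  (#|S| == k)%:R / 'C(#|T|, k)%:R.

Lemma unif_subset_ge0 k S : 0 <= unif_subset k S.
Proof. by rewrite divr_ge0 ?ler0n. Qed.

Lemma unif_subset_indicator k (P : pred {set T}) :
  \sum_S unif_subset k S * (P S)%:R =
  #|[set S : {set T} | (#|S| == k) && P S]|%:R / 'C(#|T|, k)%:R.
Proof.
under eq_bigr => S _ do rewrite mulrAC -natrM mulnb.
rewrite -mulr_suml -sum1_card natr_sum [in RHS]big_mkcond /=; congr (_ / _).
by apply: eq_bigr => S _; rewrite inE; case: (_ && _).
Qed.

Lemma unif_subset_sum1 k : (k <= #|T|)%N -> \sum_S unif_subset k S = 1.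
Proof.
move=> kT; under eq_bigr => S _ do rewrite -[unif_subset k S]mulr1.
rewrite (unif_subset_indicator k predT).
have -> : [set S : {set T} | (#|S| == k) && predT S] = [set S : {set T} | #|S| == k].
  by apply/setP => S; rewrite !inE andbT.
by rewrite card_draws divff // pnatr_eq0 -lt0n bin_gt0.
Qed.

Lemma unif_subset_mem k (r : T) : (k <= #|T|)%N ->
  \sum_S unif_subset k S * (r \in S)%:R = k%:R / #|T|%:R.
Proof.
move=> kT; rewrite unif_subset_indicator.
case: k kT => [|k] kT.
  rewrite (_ : [set S | _] = finset.set0) ?cards0 ?mul0r //.
  by apply/setP => S; rewrite !inE cards_eq0; case: eqP => // ->; rewrite inE.
have T_gt0 : (0 < #|T|)%N by apply/card_gt0P; exists r.
have -> : [set S : {set T} | (#|S| == k.+1) && (r \in S)] =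
    [set S : {set T} | [&& S \subset r |: [set~ r], r \in S & #|S| == k.+1]].
  by apply/setP => S; rewrite !inE finset.setUCr finset.subsetT andbC.
rewrite card_subsets_through ?in_setC1 ?eqxx //.
apply/eqP; rewrite eqr_div ?pnatr_eq0 -?lt0n ?bin_gt0 // -!natrM cardsC1.
by rewrite mulnC mul_bin_diag.
Qed.

Lemma unif_subset_notin k (r : T) : (k <= #|T|)%N ->
  \sum_S unif_subset k S * (r \notin S)%:R = 1 - k%:R / #|T|%:R.
Proof.
move=> kT; rewrite -(unif_subset_mem r kT) -[X in X - _](unif_subset_sum1 kT) -sumrB.
by apply: eq_bigr => S _; case: (r \in S); rewrite /= ?mulr0 ?mulr1 ?subr0 ?subrr.
Qed.

Lemma unif_subset_mem_notin k (r r' : T) : (k <= #|T|)%N -> r != r' ->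
  \sum_S unif_subset k S * ((r \in S) && (r' \notin S))%:R =
  (k * (#|T| - k))%:R / (#|T| * #|T|.-1)%:R.
Proof.
move=> kT rr'; rewrite unif_subset_indicator.
case: k kT => [|k] kT.
  by rewrite (_ : [set S | _] = finset.set0) ?cards0 ?mul0r ?mul0n //; apply/setP => S;
    rewrite !inE cards_eq0; case: eqP => // ->; rewrite inE.
have T_gt1 : (1 < #|T|)%N by apply/card_gt1P; exists r, r'.
have -> : [set S : {set T} | (#|S| == k.+1) && ((r \in S) && (r' \notin S))] =
    [set S : {set T} | [&& S \subset r |: ~: [set r; r'], r \in S & #|S| == k.+1]].
  have -> : r |: ~: [set r; r'] = [set~ r'].
    by apply/setP => x; rewrite !inE; case: (eqVneq x r) => [->|]; rewrite ?rr'.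
  apply/setP => S; rewrite !inE finset.subsetC finset.sub1set !inE.
  by case: (#|S| == k.+1); case: (r \in S); case: (r' \in S).
have card_C : #|~: [set r; r']| = #|T|.-2.
  by rewrite -(cardsC [set r; r']) cards2 rr' add2n.
rewrite card_subsets_through ?inE ?eqxx // card_C.
have T1_gt0 : (0 < #|T|.-1)%N by rewrite -ltnS prednK // ltnW.
apply/eqP; rewrite eqr_div ?pnatr_eq0 -?lt0n ?bin_gt0 ?muln_gt0 ?T1_gt0 ?(ltnW T_gt1) //.
rewrite -!natrM; apply/eqP; congr (_%:R).
by rewrite mulnC -mulnA mul_bin_diag mulnCA mul_bin_down mulnA.
Qed.

End UniformSubsets.

Section BlockDesign.
Variables (R : numFieldType) (I T : finType) (k : I -> nat).
Hypothesis k_le : forall i, (k i <= #|T|)%N.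

Definition block_design (o : {ffun I -> {set T}}) : R :=
  \prod_i unif_subset R (k i) (o i).

Lemma block_design_ge0 o : 0 <= block_design o.
Proof. by apply: prodr_ge0 => i _; apply: unif_subset_ge0. Qed.

Lemma block_design_expect (f : I -> {set T} -> R) :
  \sum_o block_design o * \prod_i f i (o i) =
  \prod_i \sum_S unif_subset R (k i) S * f i S.
Proof.
rewrite (bigA_distr_bigA (fun i S => unif_subset R (k i) S * f i S)) /=.
by apply: eq_bigr => o _; rewrite big_split.
Qed.

Lemma block_design_sum1 : \sum_o block_design o = 1.
Proof.
rewrite /block_design -(bigA_distr_bigA (fun i S => unif_subset R (k i) S)).
by rewrite big1 // => i _; apply: unif_subset_sum1.
Qed.

Definition mem_notin_factor (i j : I) (r r' : T) (b : I) (S : {set T}) : R :=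
  (if b == i then (r \in S)%:R else 1) * (if b == j then (r' \notin S)%:R else 1).

Lemma indicator_mem_notin (o : {ffun I -> {set T}}) i j (r r' : T) :
  ((r \in o i) && (r' \notin o j))%:R = \prod_b mem_notin_factor i j r r' b (o b).
Proof.
rewrite big_split /= -!big_mkcond /= !big_pred1_eq.
by case: (r \in o i); case: (r' \in o j); rewrite ?mul1r ?mul0r.
Qed.

Lemma block_design_mem_notin_same i (r r' : T) : r != r' ->
  \sum_o block_design o * ((r \in o i) && (r' \notin o i))%:R =
  (k i * (#|T| - k i))%:R / (#|T| * #|T|.-1)%:R.
Proof.
move=> rr'; under eq_bigr => o _ do rewrite indicator_mem_notin.
rewrite block_design_expect (bigD1 i) //= [X in _ * X]big1 ?mulr1.
  rewrite /mem_notin_factor eqxx.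
  under eq_bigr => S _ do rewrite -natrM mulnb.
  exact: unif_subset_mem_notin.
move=> b /negbTE bi; rewrite /mem_notin_factor bi; under eq_bigr => S _ do rewrite !mulr1.
exact: unif_subset_sum1.
Qed.

Lemma block_design_mem_notin_diff i j (r r' : T) : i != j ->
  \sum_o block_design o * ((r \in o i) && (r' \notin o j))%:R =
  (k i)%:R / #|T|%:R * (1 - (k j)%:R / #|T|%:R).
Proof.
move=> ij; under eq_bigr => o _ do rewrite indicator_mem_notin.
rewrite block_design_expect (bigD1 i) //= (bigD1 j) 1?eq_sym //=.
rewrite [X in _ * (_ * X)]big1 ?mulr1.
  rewrite /mem_notin_factor eqxx (negbTE ij) eq_sym (negbTE ij) eqxx.
  under eq_bigr => S _ do rewrite mulr1.
  under [X in _ * X]eq_bigr => S _ do rewrite mul1r.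
  by rewrite unif_subset_mem // unif_subset_notin.
move=> b /andP[/negbTE bi /negbTE bj]; rewrite /mem_notin_factor bi bj.
under eq_bigr => S _ do rewrite !mulr1.
exact: unif_subset_sum1.
Qed.

End BlockDesign.

Section BlockBound.
Variable R : realFieldType.

Definition block_bound (D s : R) : R := 1 / 4 + (D - s ^+ 2) / (4 * D * (D - 1)).

Lemma block_bound_le_same (D K s : R) : 2 <= D -> (2 * K - D) ^+ 2 <= s ^+ 2 ->
  block_bound D s <= K * (D - K) / (D * (D - 1)).
Proof.
move=> D_ge2 Ks; rewrite /block_bound -subr_ge0.
have D_neq0 : D != 0 by apply/eqP => D0; rewrite D0 in D_ge2; lra.
have D1_neq0 : D - 1 != 0 by apply/eqP => D1; lra.
have -> : K * (D - K) / (D * (D - 1)) - (1 / 4 + (D - s ^+ 2) / (4 * D * (D - 1)))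
    = (s ^+ 2 - (2 * K - D) ^+ 2) / (4 * D * (D - 1)).
  by field; rewrite D_neq0 D1_neq0.
by rewrite divr_ge0 ?mulr_ge0; lra.
Qed.

Lemma block_bound_le_cross (D K1 K2 s : R) : 2 <= D ->
  (2 * K1 - D) ^+ 2 <= s ^+ 2 -> (2 * K2 - D) ^+ 2 <= s ^+ 2 -> K2 + 1 <= K1 ->
  block_bound D s <= K1 / D * (1 - K2 / D).
Proof.
move=> D_ge2 K1s K2s K12; rewrite /block_bound -subr_ge0.
have D_neq0 : D != 0 by apply/eqP => D0; rewrite D0 in D_ge2; lra.
have D1_neq0 : D - 1 != 0 by apply/eqP => D1; lra.
have -> : K1 / D * (1 - K2 / D) - (1 / 4 + (D - s ^+ 2) / (4 * D * (D - 1)))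
    = (4 * (D - 1) * K1 * (D - K2) - D ^+ 3 + D * s ^+ 2) / (4 * D ^+ 2 * (D - 1)).
  by field; rewrite D_neq0 D1_neq0.
apply: divr_ge0; last by rewrite !mulr_ge0 ?sqr_ge0 //; lra.
have uv : 4 * ((K1 - D / 2) * (K2 - D / 2)) <= s ^+ 2 by nra.
have split_prod : 4 * K1 * (D - K2) = D ^+ 2 + 2 * D * ((K1 - D / 2) - (K2 - D / 2))
    - 4 * ((K1 - D / 2) * (K2 - D / 2)) by field.
have prod_ge : D ^+ 2 + 2 * D - s ^+ 2 <= 4 * K1 * (D - K2) by rewrite split_prod; nra.
have : (D - 1) * (D ^+ 2 + 2 * D - s ^+ 2) <= (D - 1) * (4 * K1 * (D - K2)).
  by rewrite ler_wpM2l //; lra.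
have : 0 <= (D - 1) ^+ 2 + s ^+ 2 - 1 by nra.
nra.
Qed.

End BlockBound.

Section LevelDesign.
Variables (R : realFieldType) (s D : nat).
Hypotheses (D_ge2 : (2 <= D)%N) (s_sq_le : (s ^ 2 <= D)%N) (Ds_even : ~~ odd (D + s)).

Definition level_size (b : 'I_s.+1) : nat := (D + s)./2 - b.

Let half_Ds : ((D + s)./2 * 2 = D + s)%N.
Proof. by rewrite -[RHS]odd_double_half (negbTE Ds_even) add0n muln2. Qed.

Let s_le_D : (s <= D)%N.
Proof. by apply: leq_trans s_sq_le; nia. Qed.

Lemma level_size_le b : (level_size b <= #|'I_D|)%N.
Proof. by rewrite card_ord /level_size; lia. Qed.

Lemma level_size_centered b :
  (2 * (level_size b)%:R - D%:R) ^+ 2 <= (s%:R : R) ^+ 2.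
Proof.
have b_le : (b <= s)%N by rewrite -ltnS.
have b_le_half : (b <= (D + s)./2)%N by lia.
have half_R : ((D + s)./2)%:R * 2 = D%:R + s%:R :> R by rewrite -natrM half_Ds natrD.
rewrite /level_size natrB //.
have -> : 2 * (((D + s)./2)%:R - b%:R) - D%:R = s%:R - 2 * b%:R :> R by lra.
have : (b%:R : R) <= s%:R by rewrite ler_nat.
have : 0 <= (b%:R : R) by [].
nra.
Qed.

Lemma block_design_cut_prob (bi bj : 'I_s.+1) (ri rj : 'I_D) :
  (bi < bj)%N || (bi == bj) && (ri != rj) ->
  block_bound D%:R s%:R <= \sum_o block_design R level_size o *
                                  ((ri \in o bi) && (rj \notin o bj))%:R.
Proof.
have D_ge2R : 2 <= (D%:R : R) by rewrite ler_nat.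
case/orP => [bij | /andP[/eqP <- rij]].
  rewrite (block_design_mem_notin_diff _ level_size_le) ?neq_ltn ?bij // card_ord.
  apply: block_bound_le_cross; rewrite ?level_size_centered //.
  rewrite natr1 ler_nat /level_size; have := ltn_ord bj; have := half_Ds; lia.
have kD := level_size_le bi; rewrite card_ord in kD.
rewrite (block_design_mem_notin_same _ level_size_le) // card_ord.
rewrite natrM (natrB _ kD) natrM -subn1 (natrB _ (ltnW D_ge2)).
exact: block_bound_le_same (level_size_centered bi).
Qed.

End LevelDesign.

(* The last condition is the cube of [k2 nu^(-2/3) <= (D - s^2) / (4 D (D - 1))],
   since [k2^3 = 1/4608]. *)
Definition block_params (nu s D : nat) : bool :=
  [&& 2 <= D, s ^ 2 <= D, ~~ odd (D + s), nu <= s.+1 * D &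
      (4 * D * D.-1) ^ 3 <= 4608 * nu ^ 2 * (D - s ^ 2) ^ 3]%N.

Lemma block_params_small nu : (0 < nu <= 72)%N -> block_params nu 0 (nu + odd nu).
Proof.
case/andP=> nu_gt0 nu_le.
rewrite /block_params addn0 oddD oddb addbb /= mul1n exp0n // subn0.
have cube_le : ((nu + odd nu).-1 ^ 3 <= 72 * nu ^ 2)%N.
  apply: (@leq_trans (nu ^ 3)); first by rewrite leq_exp2r //; case: (odd nu); lia.
  by rewrite (expnS nu 2) leq_mul2r nu_le orbT.
have two_le : (2 <= nu + odd nu)%N by case: nu nu_gt0 {nu_le cube_le} => [|[|n]] // _; lia.
rewrite two_le leq_addr /= !expnMn.
rewrite [X in (_ <= X)%N](_ : _ = 4 ^ 3 * (nu + odd nu) ^ 3 * (72 * nu ^ 2))%N; last by ring.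
by rewrite leq_mul2l cube_le orbT.
Qed.

Lemma block_params_large nu : (72 < nu)%N -> exists m, block_params nu m (4 * m ^ 2 + m).
Proof.
move=> nu_gt72.
have cover : exists m, (nu <= m * m.+1 * (4 * m + 1))%N.
  by exists nu; rewrite -[X in (X <= _)%N]muln1 -mulnA leq_mul2l addn1 muln_gt0 orbT.
case: (ex_minnP cover) => m nu_le m_min; exists m.
have m_ge3 : (3 <= m)%N by case: m nu_le {m_min} => [|[|[|m]]] //=; lia.
have nu_ge : (2 * m ^ 3 <= nu)%N.
  have below : (m.-1 * m * (4 * m.-1 + 1) < nu)%N.
    rewrite ltnNge; apply/negP => nu_le'.
    by have := m_min m.-1; rewrite prednK ?(leq_trans _ m_ge3) // => /(_ nu_le'); lia.
  apply: leq_trans (ltnW below); rewrite -subn1; clear -m_ge3; nia.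
set A := (4 * m ^ 2 + m)%N; set Y := (m ^ 2)%N.
have A_le : (3 * A <= 13 * Y)%N by rewrite /A /Y; clear -m_ge3; nia.
have Y_le : (3 * Y <= A - Y)%N by rewrite /A /Y; clear -m_ge3; nia.
have nu_sq : (4 * Y ^ 3 <= nu ^ 2)%N.
  have -> : (4 * Y ^ 3 = (2 * m ^ 3) ^ 2)%N by rewrite /Y expnMn -!expnM.
  by rewrite leq_exp2r.
apply/and5P; split.
- by rewrite /A; clear -m_ge3; nia.
- by rewrite /A /Y; clear -m_ge3; nia.
- by rewrite /A -addnA addnn oddD odd_double oddM.
- by rewrite (leq_trans nu_le) // /A; clear; nia.
apply: (@leq_trans ((4 * A * A) ^ 3)); first by rewrite leq_exp2r // leq_mul2l leq_pred orbT.
apply: (@leq_trans (4608 * (4 * Y ^ 3) * (3 * Y) ^ 3)); last first.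
  by rewrite leq_mul ?leq_mul2l ?nu_sq ?orbT // leq_exp2r.
have A_cube : (27 * A ^ 3 <= 2197 * Y ^ 3)%N.
  by have := A_le; rewrite -(leq_exp2r _ _ (isT : 0 < 3)%N) !expnMn.
rewrite !expnMn; move: A_cube; set P := (A ^ 3)%N; set Q := (Y ^ 3)%N; clear; nia.
Qed.

Lemma powR_cube (R : realType) (x r : R) : 0 <= x -> (x `^ r) ^+ 3 = x `^ (r * 3).
Proof. by move=> x_ge0; rewrite -powR_mulrn ?powR_ge0 // powRrM. Qed.

Lemma k2_ge0 (R : realType) : 0 <= k2 R.
Proof. by rewrite /k2 divr_ge0 // mulr_ge0 ?powR_ge0. Qed.

Lemma k2_scaled_cube (R : realType) (nu : nat) : (0 < nu)%N ->
  (k2 R * nu%:R `^ (- (2 / 3))) ^+ 3 = (4608 * nu%:R ^+ 2)^-1.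
Proof.
move=> nu_gt0; have nu_neq0 : (nu%:R : R) != 0 by rewrite pnatr_eq0 -lt0n.
rewrite exprMn /k2 powR_cube ?ler0n // expr_div_n expr1n exprMn powR_cube //.
have -> : - (2 / 3) * 3 = - (2%:R : R) by field.
have -> : 2 / 3 * 3 = (2%:R : R) by field.
rewrite powRN !powR_mulrn ?ler0n //.
by field.
Qed.

Lemma k2_scaled_le_ratio (R : realType) (nu N Q : nat) : (0 < nu)%N -> (0 < Q)%N ->
  (Q ^ 3 <= 4608 * nu ^ 2 * N ^ 3)%N -> k2 R * nu%:R `^ (- (2 / 3)) <= N%:R / Q%:R.
Proof.
move=> nu_gt0 Q_gt0 QN.
have nu_neq0 : (nu%:R : R) != 0 by rewrite pnatr_eq0 -lt0n.
have Q_neq0 : (Q%:R : R) != 0 by rewrite pnatr_eq0 -lt0n.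
rewrite -(ler_pXn2r (isT : 0 < 3)%N) ?nnegrE ?mulr_ge0 ?k2_ge0 ?powR_ge0 ?divr_ge0 //.
rewrite k2_scaled_cube // expr_div_n -subr_ge0.
have -> : N%:R ^+ 3 / Q%:R ^+ 3 - (4608 * nu%:R ^+ 2)^-1 =
    (4608 * nu%:R ^+ 2 * N%:R ^+ 3 - Q%:R ^+ 3) / (4608 * nu%:R ^+ 2 * Q%:R ^+ 3) :> R.
  by field; rewrite Q_neq0 nu_neq0.
apply: divr_ge0; last by rewrite !mulr_ge0 ?exprn_ge0 ?ler0n.
rewrite subr_ge0.
by move: QN; rewrite -(ler_nat R) !natrM !exprS !expr0 !mulr1.
Qed.

Lemma block_params_bound (R : realType) (nu s D : nat) : (0 < nu)%N ->
  block_params nu s D -> 1 / 4 + k2 R * nu%:R `^ (- (2 / 3)) <= block_bound D%:R s%:R.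
Proof.
move=> nu_gt0 /and5P[D_ge2 s_sq_le _ _ QN].
rewrite /block_bound lerD2l.
have -> : (D%:R - s%:R ^+ 2) / (4 * D%:R * (D%:R - 1)) =
    (D - s ^ 2)%N%:R / (4 * D * D.-1)%N%:R :> R.
  by rewrite natrB // natrX !natrM -subn1 natrB // ltnW.
apply: k2_scaled_le_ratio => //.
by rewrite !muln_gt0 -subn1 subn_gt0 D_ge2 (ltnW D_ge2).
Qed.

Lemma exists_block_params nu : (0 < nu)%N -> exists s D, block_params nu s D.
Proof.
move=> nu_gt0; case: (leqP nu 72) => nu_72.
  by exists 0%N, (nu + odd nu)%N; apply: block_params_small; rewrite nu_gt0.
by have [m params] := block_params_large nu_72; exists m, (4 * m ^ 2 + m)%N.
Qed.

Theorem mainTheorem15 (R : realType) (nu : nat) (hnu : (1 <= nu)%N) :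
  (((1 / 4 + k2 R * (nu%:R `^ (- (2 / 3)))) : R)%:E <= c_nu R nu)%E.
Proof.
have [s [D params]] := exists_block_params hnu.
have /and5P[D_ge2 s_sq_le Ds_even nu_le _] := params.
apply: ereal_sup_ubound; exists (1 / 4 + k2 R * nu%:R `^ (- (2 / 3))) => //; split.
  by rewrite addr_ge0 ?mulr_ge0 ?k2_ge0 ?powR_ge0.
move=> V A w Dw Aacyc Along.
have [l l_arc] := acyclic_level Aacyc Along.
have l_lt v : (l v < s.+1 * D)%N by apply: leq_trans nu_le.
have [blk [pos lex]] := lex_block_position (ltnW D_ge2) l_lt.
apply: (mac_ge_average (mu := block_design R (T := 'I_D) (@level_size s D))
                       (X := fun o => [set v | pos v \in o (blk v)]) Dw).
- exact: block_design_ge0.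
- exact/block_design_sum1/level_size_le.
move=> x y Axy; apply: le_trans (block_params_bound R hnu params) _.
under eq_bigr => o _ do rewrite !inE.
exact/block_design_cut_prob/lex/l_arc.
Qed.
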